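(* Let $\mathcal{F}\subseteq[\omega]^{<\omega}$ be a compact hereditary family covering $\omega$. Then $X^{\mathcal{F}}=FIN(\lVert\cdot\rVert^{\mathcal{F}})$.
   Context: $\omega=\{1,2,3,\dots\}$; $[\omega]^{<\omega}$ is the family of finite subsets of $\omega$. Subsets of $\omega$ are identified with elements of $2^\omega$; compact means compact in $2^\omega$; hereditary means closed under subsets. A partition is a family $\mathcal{P}\subseteq\mathcal{P}(\omega)$ with $\emptyset\in\mathcal{P}$, $\bigcup\mathcal{P}=\omega$, elements pairwise disjoint; $\mathbb{P}_\mathcal{F}$ is the set of partitions contained in $\mathcal{F}$. For $x\in\mathbb{R}^\omega$, $\lVert x\rVert^{\mathcal{F}}=\inf_{\mathcal{P}\in\mathbb{P}_\mathcal{F}}\sum_{F\in\mathcal{P}}\sup_{k\in F}|x(k)|\in[0,\infty]$. $P_{\omega\setminus n}(x)$ is the sequence agreeing with $x$ on $\{n+1,n+2,\dots\}$ and $0$ on $\{1,\dots,n\}$. $FIN(\varphi)=\{x:\varphi(x)<\infty\}$, $EXH(\varphi)=\{x:\lim_n\varphi(P_{\omega\setminus n}(x))=0\}$, and $X^{\mathcal{F}}=EXH(\lVert\cdot\rVert^{\mathcal{F}})$. *)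

From HB Require Import structures.
From mathcomp Require Import all_boot all_order all_algebra.
From mathcomp Require Import all_classical all_reals all_analysis.
Set Implicit Arguments. Unset Strict Implicit. Unset Printing Implicit Defensive.
Import Order.TTheory GRing.Theory Num.Theory.
Local Open Scope classical_set_scope.
Local Open Scope ring_scope.

(* Conventions: omega = {1,2,3,...} is represented by nat = {0,1,2,...}
   via k <-> k+1.  Subsets of omega are elements of 2^omega = (nat -> bool),
   carrying the product (Cantor) topology of mathcomp-analysis. *)

Notation subset2 := cantor_space.

Definition finite_sub (A : subset2) : Prop := finite_set [set k | A k].

Definition sub2 (B A : subset2) : Prop := forall k, B k -> A k.

Definition hereditary (F : set subset2) : Prop :=
  forall A B, F A -> sub2 B A -> F B.

Definition covers_omega (F : set subset2) : Prop :=
  forall k, exists2 A, F A & A k.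

Definition is_partition (P : set subset2) : Prop :=
  [/\ P (fun _ => false),
      (forall k, exists2 A, P A & A k) &
      (forall A B, P A -> P B -> A <> B -> forall k, A k -> B k -> False)].

Definition partitions_in (F : set subset2) : set (set subset2) :=
  [set P | is_partition P /\ P `<=` F].

Definition supabs {R : realType} (x : nat -> R) (A : subset2) : \bar R :=
  ereal_sup ([set ((`|x k|)%:E) | k in [set k | A k]] `|` [set 0%E]).

Definition Fnorm {R : realType} (F : set subset2) (x : nat -> R) : \bar R :=
  ereal_inf [set esum P (supabs x) | P in partitions_in F].

(* P_{omega \ n}(x): agrees with x on {n+1, n+2, ...} and is 0 on {1..n};
   with the 0-based indexing this zeroes the indices k < n. *)
Definition tailP {R : realType} (n : nat) (x : nat -> R) : nat -> R :=
  fun k => if (k < n)%N then 0 else x k.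

Definition FIN {R : realType} (phi : (nat -> R) -> \bar R) : set (nat -> R) :=
  [set x | (phi x < +oo)%E].

Definition EXH {R : realType} (phi : (nat -> R) -> \bar R) : set (nat -> R) :=
  [set x | (fun n => phi (tailP n x)) @ \oo --> 0%E].

Definition XF {R : realType} (F : set subset2) : set (nat -> R) := EXH (Fnorm F).

From HB Require Import structures.
From mathcomp Require Import all_boot all_order all_algebra.
From mathcomp Require Import all_classical all_reals all_analysis.
Set Implicit Arguments. Unset Strict Implicit. Unset Printing Implicit Defensive.
Import Order.TTheory GRing.Theory Num.Theory.
Local Open Scope classical_set_scope.
Local Open Scope ring_scope.

(* If ||x||^F < oo, some partition P in P_F has a finite sum
   S = sum_{A in P} sup_A |x|. Finitely many blocks of P carry all of S up to
   e, and, being finite sets, they lie inside {1..N} for some N; for n >= N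
   these blocks vanish on P_{omega \ n}(x), so ||P_{omega \ n}(x)||^F <= e.
   Conversely, if ||P_{omega \ n}(x)||^F is finite, as witnessed by a
   partition Q, then putting back the first n coordinates of x only affects
   the finitely many blocks of Q that meet {1..n}, each by at most
   sum_{k <= n} |x(k)|; hence ||x||^F is finite as well. *)

Lemma finite_nat_bounded (A : set nat) :
  finite_set A -> exists N, forall k, A k -> (k < N)%N.
Proof.
move/finite_seqP=> [s ->]; elim: s => [|a s [N HN]]; first by exists 0%N.
exists (maxn a.+1 N) => k /=; rewrite inE => /orP[/eqP->|ks].
  by rewrite leq_max leqnn.
by rewrite leq_max (HN k ks) orbT.
Qed.

Definition meets (S : set nat) : set subset2 := [set A | exists2 k, S k & A k].

Lemma partition_meets_finite (P : set subset2) (S : set nat) :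
  is_partition P -> finite_set S -> finite_set (P `&` meets S).
Proof.
case=> _ cov disj finS; pose block k := projT1 (cid2 (cov k)).
apply: sub_finite_set (finite_image block finS) => A [PA [k Sk Ak]].
exists k => //; rewrite /block; case: cid2 => B PB Bk /=.
have [//|BA] := pselect (B = A).
by case: (disj _ _ PB PA BA k Bk Ak).
Qed.

Section ExtendedReals.
Variable R : realType.
Local Open Scope ereal_scope.

Lemma cvge0_nonneg (u : nat -> \bar R) : (forall n, 0 <= u n) ->
  (forall e : R, (0 < e)%R -> exists N, forall n, (N <= n)%N -> u n <= e%:E) ->
  u @ \oo --> 0.
Proof.
move=> u0 u_small; apply/fine_cvgP; split.
- have [N HN] := u_small 1%R ltr01; exists N => // n /= Nn.
  by rewrite ge0_fin_numE //; apply: le_lt_trans (HN n Nn) _; exact: ltry.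
- apply/cvgrPdist_le => e e0; have [N HN] := u_small e e0; exists N => // n /= Nn.
  rewrite sub0r normrN /=; have := HN n Nn; have := u0 n.
  by case: (u n) => //= r; rewrite !lee_fin => r0 re; rewrite ger0_norm.
Qed.

Lemma esum_finite_remainder (T : choiceType) (P : set T) (f : T -> \bar R) e :
  (forall t, P t -> 0 <= f t) -> esum P f < +oo -> (0 < e)%R ->
  exists2 X, finite_set X /\ X `<=` P & esum (P `&` ~` X) f <= e%:E.
Proof.
move=> f0 Pfin e0; set s := esum P f.
have s0 : 0 <= s := esum_ge0 f0.
have sfin : s \is a fin_num by rewrite ge0_fin_numE.
have : s - e%:E < s by rewrite lteBlDr // lteDl // lte_fin.
move=> /ereal_sup_gt[_ [X [finX XP] <-]] lt_sX; exists X => //.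
have := @esumID _ _ X P f f0; rewrite -/s (setIidr XP) esum_fset //; last first.
  by move=> t /[!inE] Xt; exact: f0 (XP t Xt).
set a := (\sum_(i \in X) f i) in lt_sX *; set b := esum _ _ => s_ab.
have a0 : 0 <= a by apply: fsume_ge0 => t Xt; exact: f0 (XP t Xt).
have b0 : 0 <= b by apply: esum_ge0 => t [/f0].
have afin : a \is a fin_num.
  by rewrite ge0_fin_numE //; apply: le_lt_trans (_ : a <= s) _;
    [rewrite s_ab leeDl | rewrite -ge0_fin_numE].
by move: lt_sX; rewrite lteBlDr // s_ab lteD2lE // => /ltW.
Qed.

Lemma supabs_ge0 (x : nat -> R) (A : subset2) : 0 <= supabs x A.
Proof. by apply: ereal_sup_ubound; right. Qed.

Lemma ge_supabs (x : nat -> R) (A : subset2) c :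
  (forall k, A k -> (`|x k|)%:E <= c) -> 0 <= c -> supabs x A <= c.
Proof. by move=> h c0; apply: ge_ereal_sup => _ [[k Ak <-]|->]; [exact: h|]. Qed.

Lemma le_supabs (x y : nat -> R) (A : subset2) :
  (forall k, A k -> (`|x k| <= `|y k|)%R) -> supabs x A <= supabs y A.
Proof.
move=> h; apply: ge_supabs (supabs_ge0 _ _) => k Ak.
apply: le_trans (_ : (`|y k|)%:E <= _); first by rewrite lee_fin h.
by apply: ereal_sup_ubound; left; exists k.
Qed.

Lemma normr_tailP_le n (x : nat -> R) k : (`|tailP n x k| <= `|x k|)%R.
Proof. by rewrite /tailP; case: ifP; rewrite ?normr0. Qed.

Lemma supabs_tailP0 n (x : nat -> R) (A : subset2) :
  (forall k, A k -> (k < n)%N) -> supabs (tailP n x) A = 0.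
Proof.
move=> h; apply/le_anti; rewrite supabs_ge0 andbT.
by apply: ge_supabs => // k Ak; rewrite /tailP h ?normr0.
Qed.

Lemma supabs_le_tailP n (x : nat -> R) (A : subset2) :
  supabs x A <= supabs (tailP n x) A +
     (if A \in meets `I_n then (\sum_(k < n) `|x k|)%:E else 0).
Proof.
have sum0 : (0 <= \sum_(k < n) `|x k|)%R by rewrite sumr_ge0.
apply: ge_supabs; last by rewrite adde_ge0 ?supabs_ge0//; case: ifP.
move=> k Ak; case: (ltnP k n) => kn.
  have -> : A \in meets `I_n by rewrite inE; exists k.
  apply: le_trans (_ : (\sum_(k < n) `|x k|)%:E <= _); last first.
    by rewrite leeDr ?supabs_ge0.
  by rewrite lee_fin (bigD1 (Ordinal kn)) //= lerDl sumr_ge0.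
apply: le_trans (_ : supabs (tailP n x) A <= _); last first.
  by rewrite leeDl//; case: ifP.
have -> : (`|x k|)%R = (`|tailP n x k|)%R by rewrite /tailP ltnNge kn.
by apply: ereal_sup_ubound; left; exists k.
Qed.

Lemma Fnorm_ge0 (F : set subset2) (x : nat -> R) : 0 <= Fnorm F x.
Proof.
apply: le_ereal_inf_tmp => _ [Q _ <-].
by apply: esum_ge0 => *; exact: supabs_ge0.
Qed.

Lemma Fnorm_fin_tailP (F : set subset2) (x : nat -> R) n :
  Fnorm F (tailP n x) < +oo -> Fnorm F x < +oo.
Proof.
move=> /ereal_inf_lt[_ [Q [partQ QF] <-]] Qfin.
apply: le_lt_trans (_ : esum Q (supabs x) < +oo).
  by apply: ereal_inf_lbound; exists Q.
apply: le_lt_trans (le_esum (fun A _ => supabs_le_tailP n x A)) _.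
rewrite esumD; last 2 first.
- by move=> *; exact: supabs_ge0.
- by move=> *; case: ifP => // _; rewrite lee_fin sumr_ge0.
have finQ := partition_meets_finite partQ (finite_II n).
rewrite lte_add_pinfty // -esum_mkcondr esum_fset //.
  by rewrite fsumEFin // ltry.
by move=> *; rewrite lee_fin sumr_ge0.
Qed.

Lemma XF_sub_FIN (F : set subset2) : XF F `<=` FIN (Fnorm (R := R) F).
Proof.
move=> x /fine_cvgP[[N _ HN] _]; apply: (@Fnorm_fin_tailP _ _ N).
have := HN N (leqnn N); rewrite /= fin_numE => /andP[_ /eqP ?].
by rewrite ltey; apply/eqP.
Qed.

Lemma FIN_sub_XF (F : set subset2) : (forall A, F A -> finite_sub A) ->
  FIN (Fnorm (R := R) F) `<=` XF F.
Proof.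
move=> Ffin x /ereal_inf_lt[_ [P [partP PF] <-]] Pfin.
apply: cvge0_nonneg => [n|e e0]; first exact: Fnorm_ge0.
have [X [finX XP] rem_le] :=
  esum_finite_remainder (fun A _ => supabs_ge0 x A) Pfin e0.
have [N ltN] : exists N, forall k, (\bigcup_(A in X) [set k | A k]) k -> (k < N)%N.
  apply: finite_nat_bounded; apply: bigcup_finite => // A XA.
  exact: Ffin (PF _ (XP _ XA)).
exists N => n Nn; apply: le_trans (_ : esum P (supabs (tailP n x)) <= _).
  by apply: ereal_inf_lbound; exists P.
rewrite (esumID X); last by move=> *; exact: supabs_ge0.
rewrite esum1 ?add0e; last first.
  move=> A [_ XA]; apply: supabs_tailP0 => k Ak.
  by apply: leq_trans (ltN k _) Nn; exists A.
apply: le_trans rem_le; apply: le_esum => A _.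
by apply: le_supabs => k _; exact: normr_tailP_le.
Qed.

End ExtendedReals.

Unset Implicit Arguments.

Theorem mainTheorem6 (R : realType) (F : set subset2) :
  (forall A, F A -> finite_sub A) ->
  compact F ->
  hereditary F ->
  covers_omega F ->
  XF (R := R) F = FIN (Fnorm F).
Proof.
move=> Ffin _ _ _; apply/seteqP; split; [exact: XF_sub_FIN | exact: FIN_sub_XF].
Qed.
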